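(* Let $K$ be a simplex in a topological vector space $F$ and let $T:K\to 2^{K}$ be a weakly naturally quasiconvex correspondence. Then $T$ has a fixed point, i.e. there exists $x^*\in K$ with $x^*\in T(x^* )$.
   Context: A simplex is the convex hull of a finite affinely independent set. $\Delta_{n-1}=\{(\lambda_1,\dots,\lambda_n)\in\mathbb{R}^n:\sum_{i=1}^n\lambda_i=1,\ \lambda_i\ge 0\}$. Weakly naturally quasiconvex (WNQ): let $X,Y$ be nonempty convex subsets of topological vector spaces. A correspondence $T:X\to 2^{Y}$ is weakly naturally quasiconvex if for each $n\in\mathbb{N}$ and each finite set $\{x_1,\dots,x_n\}\subset X$ there exist $y_i\in T(x_i)$ ($i=1,\dots,n$) and a bijection $g:\Delta_{n-1}\to\Delta_{n-1}$ (depending on $x_1,\dots,x_n$) of the form $g(\lambda_1,\dots,\lambda_n)=(g_1(\lambda_1),\dots,g_n(\lambda_n))$, where each $g_i:[0,1]\to[0,1]$ is continuous with $g_i(0)=0$ and $g_i(1)=1$, such that for every $(\lambda_1,\dots,\lambda_n)\in\Delta_{n-1}$ we have $\sum_{i=1}^n g_i(\lambda_i)y_i\in T\big(\sum_{i=1}^n\lambda_i x_i\big)$. *)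

From Stdlib Require Import Reals.
Open Scope R_scope.

(* A real vector space (the topology of F plays no role in the statement:
   simplices, convex combinations and the WNQ property are purely affine). *)
Record RVectorSpace := {
  vcarrier :> Type;
  vzero : vcarrier;
  vadd : vcarrier -> vcarrier -> vcarrier;
  vscal : R -> vcarrier -> vcarrier;
  vadd_assoc : forall u v w, vadd u (vadd v w) = vadd (vadd u v) w;
  vadd_comm : forall u v, vadd u v = vadd v u;
  vadd_zero : forall u, vadd u vzero = u;
  vadd_opp : forall u, vadd u (vscal (-1) u) = vzero;
  vscal_one : forall u, vscal 1 u = u;
  vscal_assoc : forall a b u, vscal a (vscal b u) = vscal (a * b) u;
  vscal_distr_v : forall a u v, vscal a (vadd u v) = vadd (vscal a u) (vscal a v);
  vscal_distr_r : forall a b u, vscal (a + b) u = vadd (vscal a u) (vscal b u)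
}.

Arguments vzero {_}.
Arguments vadd {_} _ _.
Arguments vscal {_} _ _.

Fixpoint vsum {V : RVectorSpace} (n : nat) (f : nat -> V) : V :=
  match n with
  | O => vzero
  | S k => vadd (vsum k f) (f k)
  end.

Fixpoint rsum (n : nat) (f : nat -> R) : R :=
  match n with
  | O => 0
  | S k => rsum k f + f k
  end.

Definition in_std_simplex (n : nat) (lam : nat -> R) : Prop :=
  rsum n lam = 1 /\ forall i, (i < n)%nat -> 0 <= lam i.

Definition affinely_independent {V : RVectorSpace} (m : nat) (v : nat -> V) : Prop :=
  forall mu : nat -> R,
    rsum m mu = 0 -> vsum m (fun i => vscal (mu i) (v i)) = vzero ->
    forall i, (i < m)%nat -> mu i = 0.

Definition is_simplex {V : RVectorSpace} (K : V -> Prop) : Prop :=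
  exists (m : nat) (v : nat -> V),
    (1 <= m)%nat /\ affinely_independent m v /\
    forall x, K x <-> exists lam, in_std_simplex m lam /\
                                  x = vsum m (fun i => vscal (lam i) (v i)).

Definition continuous_on_01 (h : R -> R) : Prop :=
  forall t, 0 <= t <= 1 -> forall eps, 0 < eps ->
    exists delta, 0 < delta /\
      forall s, 0 <= s <= 1 -> Rabs (s - t) < delta -> Rabs (h s - h t) < eps.

Definition simplex_bijection (n : nat) (g : nat -> R -> R) : Prop :=
  (forall lam, in_std_simplex n lam -> in_std_simplex n (fun i => g i (lam i))) /\
  (forall lam mu, in_std_simplex n lam -> in_std_simplex n mu ->
     (forall i, (i < n)%nat -> g i (lam i) = g i (mu i)) ->
     forall i, (i < n)%nat -> lam i = mu i) /\
  (forall nu, in_std_simplex n nu ->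
     exists lam, in_std_simplex n lam /\
       forall i, (i < n)%nat -> g i (lam i) = nu i).

(* Weakly naturally quasiconvex correspondence T : X -> 2^Y,
   with T x y meaning y \in T(x). *)
Definition WNQ {V W : RVectorSpace} (X : V -> Prop) (Y : W -> Prop)
  (T : V -> W -> Prop) : Prop :=
  forall (n : nat) (x : nat -> V),
    (1 <= n)%nat ->
    (forall i, (i < n)%nat -> X (x i)) ->
    (forall i j, (i < n)%nat -> (j < n)%nat -> x i = x j -> i = j) ->
    exists (y : nat -> W) (g : nat -> R -> R),
      (forall i, (i < n)%nat -> T (x i) (y i)) /\
      (forall i, (i < n)%nat ->
         continuous_on_01 (g i) /\
         (forall t, 0 <= t <= 1 -> 0 <= g i t <= 1) /\
         g i 0 = 0 /\ g i 1 = 1) /\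
      simplex_bijection n g /\
      (forall lam, in_std_simplex n lam ->
         T (vsum n (fun i => vscal (lam i) (x i)))
           (vsum n (fun i => vscal (g i (lam i)) (y i)))).

(* Let K be the simplex spanned by affinely independent vertices v_0..v_{m-1}
   and T : K -> 2^K be WNQ.  The proof needs no topology:

   1. Coordinate maps.  If n >= 3 maps g_i : [0,1] -> [0,1] with g_i 0 = 0,
      g_i 1 = 1 send the standard simplex into itself coordinatewise, then
      testing on points with three nonzero coordinates makes each g_i additive,
      and an additive nonnegative map fixing 1 is the identity.
   2. Affine selection.  Apply the WNQ property to the m vertices (plus the
      midpoint of an edge when m >= 2, to have at least three distinct points):
      by 1 the coordinate maps are identities, so there are y_i in T(v_i) with
      sum_i mu_i y_i in T(sum_i mu_i v_i) for every mu in the simplex.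
   3. Stationary distributions.  The barycentric coordinates A of the y_i
      form a stochastic matrix, which has a stationary distribution pi
      (induction on the number of states, censoring the last one).
   4. The point x = sum_i pi_i v_i satisfies sum_i pi_i y_i = x by
      stationarity, hence x lies in T(x) by 2. *)

From Stdlib Require Import Reals Lra Lia IndefiniteDescription.
Open Scope R_scope.

Lemma rsum_ext n f h : (forall i, (i < n)%nat -> f i = h i) -> rsum n f = rsum n h.
Proof.
  induction n as [|n IH]; simpl; intros Hfh; auto.
  rewrite IH by (intros; apply Hfh; lia). rewrite Hfh by lia; reflexivity.
Qed.

Lemma rsum_plus n f h : rsum n (fun i => f i + h i) = rsum n f + rsum n h.
Proof. induction n as [|n IH]; simpl; [lra|]. rewrite IH; lra. Qed.

Lemma rsum_mult n c f : rsum n (fun i => c * f i) = c * rsum n f.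
Proof. induction n as [|n IH]; simpl; [lra|]. rewrite IH; lra. Qed.

Lemma rsum_zero n f : (forall i, (i < n)%nat -> f i = 0) -> rsum n f = 0.
Proof.
  induction n as [|n IH]; simpl; intros Hf; [lra|].
  rewrite IH by (intros; apply Hf; lia). rewrite Hf by lia; lra.
Qed.

Lemma rsum_nonneg n f : (forall i, (i < n)%nat -> 0 <= f i) -> 0 <= rsum n f.
Proof.
  induction n as [|n IH]; simpl; intros Hf; [lra|].
  pose proof (Hf n ltac:(lia)); pose proof (IH ltac:(intros; apply Hf; lia)); lra.
Qed.

Lemma rsum_le_term n f a :
  (forall i, (i < n)%nat -> 0 <= f i) -> (a < n)%nat -> f a <= rsum n f.
Proof.
  induction n as [|n IH]; simpl; intros Hf Ha; [lia|].
  pose proof (Hf n ltac:(lia)).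
  destruct (Nat.eq_dec a n) as [->|Han].
  - pose proof (rsum_nonneg n f ltac:(intros; apply Hf; lia)); lra.
  - pose proof (IH ltac:(intros; apply Hf; lia) ltac:(lia)); lra.
Qed.

Definition point (a : nat) (c : R) (i : nat) : R := if Nat.eqb i a then c else 0.

Lemma rsum_point n a c : (a < n)%nat -> rsum n (point a c) = c.
Proof.
  unfold point; induction n as [|n IH]; simpl; intros Ha; [lia|].
  destruct (Nat.eqb_spec n a) as [->|Hna].
  - rewrite rsum_zero; [lra|]. intros i Hi. destruct (Nat.eqb_spec i a); [lia|auto].
  - rewrite IH by lia; lra.
Qed.

Lemma rsum_three n a b c x y z :
  (a < n)%nat -> (b < n)%nat -> (c < n)%nat ->
  rsum n (fun i => point a x i + point b y i + point c z i) = x + y + z.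
Proof. intros. rewrite !rsum_plus, !rsum_point; auto. Qed.

(** * Coordinate maps that preserve the standard simplex *)

(* A nonnegative function on [0,1] that is additive and fixes 1 is the
   identity: its defect [f t - t] is halved by doubling small arguments and
   changes sign under [t |-> 1 - t], so it is smaller than every [(1/2)^N]. *)
Lemma additive_unit_identity (f : R -> R) :
  (forall t s, 0 <= t -> 0 <= s -> t + s <= 1 -> f (t + s) = f t + f s) ->
  f 1 = 1 -> (forall t, 0 <= t <= 1 -> 0 <= f t) ->
  forall t, 0 <= t <= 1 -> f t = t.
Proof.
  intros Hadd H1 Hpos.
  assert (Hcompl : forall t, 0 <= t <= 1 -> f t + f (1 - t) = 1).
  { intros t Ht. rewrite <- Hadd by lra. replace (t + (1 - t)) with 1 by ring; exact H1. }
  assert (Hdefect : forall N t, 0 <= t <= 1 -> - (/ 2) ^ N <= f t - t <= (/ 2) ^ N).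
  { induction N as [|N IH]; intros t Ht; simpl.
    - pose proof (Hcompl t Ht); pose proof (Hpos t Ht); pose proof (Hpos (1 - t) ltac:(lra)); lra.
    - assert (Hsmall : forall s, 0 <= s <= / 2 -> - (/ 2 * (/ 2) ^ N) <= f s - s <= / 2 * (/ 2) ^ N).
      { intros s Hs. pose proof (IH (s + s) ltac:(lra)) as Hd. rewrite Hadd in Hd by lra. lra. }
      destruct (Rle_lt_dec t (/ 2)) as [Hle|Hgt]; [apply Hsmall; lra|].
      pose proof (Hsmall (1 - t) ltac:(lra)); pose proof (Hcompl t Ht); lra. }
  intros t Ht. destruct (Req_dec (f t - t) 0) as [E|E]; [lra|].
  destruct (pow_lt_1_zero (/ 2) ltac:(rewrite Rabs_pos_eq; lra) (Rabs (f t - t)) (Rabs_pos_lt _ E))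
    as [N HN].
  specialize (HN N (Nat.le_refl N)). rewrite Rabs_pos_eq in HN by (apply pow_le; lra).
  pose proof (Hdefect N t Ht). exfalso. split_Rabs; lra.
Qed.

Section CoordinateMaps.

Variables (n : nat) (g : nat -> R -> R).
Hypothesis Hn : (3 <= n)%nat.
Hypothesis Hg : forall i, (i < n)%nat -> g i 0 = 0 /\ g i 1 = 1 /\ forall t, 0 <= t <= 1 -> 0 <= g i t.
Hypothesis Hsum : forall lam, in_std_simplex n lam -> rsum n (fun i => g i (lam i)) = 1.

Lemma coordinate_maps_three a b c t s :
  (a < n)%nat -> (b < n)%nat -> (c < n)%nat -> a <> b -> a <> c -> b <> c ->
  0 <= t -> 0 <= s -> t + s <= 1 -> g a t + g b s + g c (1 - t - s) = 1.
Proof.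
  intros Ha Hb Hc Hab Hac Hbc Ht Hs Hts.
  set (lam i := point a t i + point b s i + point c (1 - t - s) i).
  assert (Hlam : in_std_simplex n lam).
  { split.
    - unfold lam; rewrite rsum_three; auto; ring.
    - intros i _; unfold lam, point.
      destruct (Nat.eqb i a), (Nat.eqb i b), (Nat.eqb i c); lra. }
  rewrite <- (rsum_three n a b c) by auto.
  transitivity (rsum n (fun i => g i (lam i))); [|exact (Hsum lam Hlam)].
  apply rsum_ext; intros i Hi; unfold lam, point.
  destruct (Nat.eqb_spec i a), (Nat.eqb_spec i b), (Nat.eqb_spec i c); subst; try lia;
    rewrite ?Rplus_0_l, ?Rplus_0_r; try reflexivity.
  symmetry; apply Hg; auto.
Qed.

Lemma coordinate_maps_identity i : (i < n)%nat -> forall t, 0 <= t <= 1 -> g i t = t.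
Proof.
  intros Hi.
  assert (exists b c, (b < n)%nat /\ (c < n)%nat /\ i <> b /\ i <> c /\ b <> c)
    as (b & c & Hb & Hc & Hib & Hic & Hbc).
  { destruct (Nat.eq_dec i 0); [exists 1%nat, 2%nat; lia|].
    destruct (Nat.eq_dec i 1); [exists 0%nat, 2%nat; lia|exists 0%nat, 1%nat; lia]. }
  destruct (Hg i Hi) as (Gi0 & Gi1 & Gipos). destruct (Hg b Hb) as (Gb0 & _ & _).
  apply additive_unit_identity; auto.
  intros t s Ht Hs Hts.
  pose proof (coordinate_maps_three i b c t s Hi Hb Hc Hib Hic Hbc Ht Hs Hts) as E1.
  pose proof (coordinate_maps_three i b c (t + s) 0 Hi Hb Hc Hib Hic Hbc
                ltac:(lra) ltac:(lra) ltac:(lra)) as E2.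
  assert (Hswap : g b s = g i s).
  { pose proof (coordinate_maps_three i b c 0 s Hi Hb Hc Hib Hic Hbc
                  ltac:(lra) Hs ltac:(lra)) as E3.
    pose proof (coordinate_maps_three i b c s 0 Hi Hb Hc Hib Hic Hbc
                  Hs ltac:(lra) ltac:(lra)) as E4.
    replace (1 - 0 - s) with (1 - s - 0) in E3 by ring. lra. }
  replace (1 - (t + s) - 0) with (1 - t - s) in E2 by ring.
  lra.
Qed.

End CoordinateMaps.

(** * Stationary distributions of stochastic matrices *)

Definition stochastic (n : nat) (P : nat -> nat -> R) : Prop :=
  (forall i j, (i < n)%nat -> (j < n)%nat -> 0 <= P i j) /\
  (forall i, (i < n)%nat -> rsum n (P i) = 1).

Definition left_fixed (n : nat) (P : nat -> nat -> R) (w : nat -> R) : Prop :=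
  forall j, (j < n)%nat -> rsum n (fun i => w i * P i j) = w j.

Definition stationary (n : nat) (P : nat -> nat -> R) (pi : nat -> R) : Prop :=
  in_std_simplex n pi /\ left_fixed n P pi.

Lemma normalize_fixed_vector n P w :
  (forall i, (i < n)%nat -> 0 <= w i) -> 0 < rsum n w -> left_fixed n P w ->
  exists pi, stationary n P pi.
Proof.
  intros Hw Hs Hfix. exists (fun i => / rsum n w * w i). split; [split|].
  - rewrite rsum_mult; field; lra.
  - intros i Hi. pose proof (Hw i Hi). pose proof (Rinv_0_lt_compat _ Hs). nra.
  - intros j Hj. rewrite <- (Hfix j Hj), <- rsum_mult.
    apply rsum_ext; intros; ring.
Qed.

Section LastState.

Variables (N : nat) (P : nat -> nat -> R).
Hypothesis HP : stochastic (S N) P.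

Lemma absorbing_state_stationary : P N N = 1 -> exists pi, stationary (S N) P pi.
Proof.
  intros HNN. destruct HP as [Hpos Hrow].
  apply (normalize_fixed_vector _ P (point N 1)).
  - intros i _; unfold point; destruct (Nat.eqb i N); lra.
  - rewrite rsum_point by lia; lra.
  - intros j Hj.
    rewrite (rsum_ext _ _ (point N (P N j))), rsum_point; [|lia|].
    2:{ unfold point; intros i _; destruct (Nat.eqb_spec i N) as [->|]; ring. }
    unfold point; destruct (Nat.eqb_spec j N) as [->|HjN]; auto.
    pose proof (Hrow N ltac:(lia)) as HN; simpl in HN.
    pose proof (rsum_le_term N (P N) j ltac:(intros; apply Hpos; lia) ltac:(lia)).
    pose proof (Hpos N j ltac:(lia) Hj). lra.
Qed.

(* The chain censored to the first [N] states: a visit to the last state is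
   replaced by the state the chain leaves it for. *)
Definition censored (i j : nat) : R := P i j + P i N * P N j / (1 - P N N).

Lemma last_state_escape : P N N <> 1 -> 0 < 1 - P N N.
Proof.
  intros HNN. destruct HP as [Hpos Hrow].
  pose proof (rsum_le_term (S N) (P N) N ltac:(intros; apply Hpos; lia) ltac:(lia)).
  rewrite Hrow in * by lia. lra.
Qed.

Lemma censored_stochastic : P N N <> 1 -> stochastic N censored.
Proof.
  intros HNN. pose proof (last_state_escape HNN) as Hd. destruct HP as [Hpos Hrow].
  split; unfold censored.
  - intros i j Hi Hj.
    pose proof (Hpos i j ltac:(lia) ltac:(lia)); pose proof (Hpos i N ltac:(lia) ltac:(lia)).
    pose proof (Hpos N j ltac:(lia) ltac:(lia)).
    assert (0 <= P i N * P N j / (1 - P N N)) by (apply Rle_mult_inv_pos; nra). lra.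
  - intros i Hi.
    rewrite rsum_plus, (rsum_ext _ (fun j => P i N * P N j / (1 - P N N))
                                 (fun j => P i N / (1 - P N N) * P N j)) by (intros; field; lra).
    rewrite rsum_mult.
    pose proof (Hrow i ltac:(lia)) as Hi'; pose proof (Hrow N ltac:(lia)) as HN'; simpl in Hi', HN'.
    replace (rsum N (P N)) with (1 - P N N) by lra. field_simplify; lra.
Qed.

(* A left-fixed vector of the censored chain extends to one of [P], the new
   last coordinate being the flow into the last state divided by the escape
   probability. *)
Definition extend_fixed (w : nat -> R) (i : nat) : R :=
  if Nat.ltb i N then w i else rsum N (fun k => w k * P k N) / (1 - P N N).

Lemma extend_fixed_left_fixed w :
  P N N <> 1 -> left_fixed N censored w -> left_fixed (S N) P (extend_fixed w).
Proof.
  intros HNN Hfix j Hj. pose proof (last_state_escape HNN) as Hd.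
  assert (Hlow : forall f : nat -> R,
             rsum N (fun i => extend_fixed w i * f i) = rsum N (fun i => w i * f i)).
  { intros f; apply rsum_ext; intros i Hi; unfold extend_fixed.
    destruct (Nat.ltb_spec i N); [reflexivity|lia]. }
  assert (Hlast : extend_fixed w N = rsum N (fun k => w k * P k N) / (1 - P N N)).
  { unfold extend_fixed; rewrite Nat.ltb_irrefl; reflexivity. }
  simpl; rewrite (Hlow (fun i => P i j)), Hlast.
  destruct (Nat.ltb_spec j N) as [HjN|HjN].
  - unfold extend_fixed; apply Nat.ltb_lt in HjN as HjN'; rewrite HjN'.
    rewrite <- (Hfix j HjN); unfold censored.
    rewrite (rsum_ext _ (fun i => w i * (P i j + P i N * P N j / (1 - P N N)))
                       (fun i => w i * P i j + P N j / (1 - P N N) * (w i * P i N)))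
      by (intros; field; lra).
    rewrite rsum_plus, rsum_mult; field; lra.
  - assert (j = N) as -> by lia. rewrite Hlast; field; lra.
Qed.

Lemma censored_stationary :
  P N N <> 1 -> (exists w, stationary N censored w) -> exists pi, stationary (S N) P pi.
Proof.
  intros Hesc [w [[Hw1 Hw0] Hfix]]. pose proof (last_state_escape Hesc) as Hd.
  destruct HP as [Hpos _].
  assert (Hlow : forall i, (i < N)%nat -> extend_fixed w i = w i).
  { intros i Hi; unfold extend_fixed; apply Nat.ltb_lt in Hi as Hi'; rewrite Hi'; reflexivity. }
  assert (Hlast : 0 <= extend_fixed w N).
  { unfold extend_fixed; rewrite Nat.ltb_irrefl.
    apply Rle_mult_inv_pos; auto. apply rsum_nonneg; intros k Hk.
    apply Rmult_le_pos; [apply Hw0; auto|apply Hpos; lia]. }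
  apply (normalize_fixed_vector _ P (extend_fixed w)).
  - intros i Hi; destruct (Nat.eq_dec i N) as [->|HiN]; [auto|].
    rewrite Hlow by lia; apply Hw0; lia.
  - simpl; rewrite (rsum_ext _ _ w), Hw1 by auto; lra.
  - apply extend_fixed_left_fixed; auto.
Qed.

End LastState.

(* Every stochastic matrix has a stationary distribution; by induction on the
   number of states, censoring the last state unless it is absorbing. *)
Lemma stationary_distribution n P :
  (1 <= n)%nat -> stochastic n P -> exists pi, stationary n P pi.
Proof.
  intros Hn; destruct n as [|N]; [lia|clear Hn].
  revert P; induction N as [|N IH]; intros P HP.
  - apply absorbing_state_stationary; auto.
    destruct HP as [_ Hrow]. pose proof (Hrow 0%nat ltac:(lia)); simpl in *; lra.
  - destruct (Req_dec (P (S N) (S N)) 1) as [Habs|Hesc].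
    + apply absorbing_state_stationary; auto.
    + apply censored_stationary; auto.
      apply IH, censored_stochastic; auto.
Qed.

Notation combination n lam v := (vsum n (fun i => vscal (lam i) (v i))).

Section Combinations.

Context {V : RVectorSpace}.

Lemma vadd_zero_l (u : V) : vadd vzero u = u.
Proof. rewrite vadd_comm; apply vadd_zero. Qed.

Lemma vadd_idempotent (w : V) : vadd w w = w -> w = vzero.
Proof.
  intros H. rewrite <- (vadd_zero _ w), <- (vadd_opp _ w) at 1.
  rewrite vadd_assoc, H; apply vadd_opp.
Qed.

Lemma vscal_zero (u : V) : vscal 0 u = vzero.
Proof. apply vadd_idempotent; rewrite <- vscal_distr_r; f_equal; ring. Qed.

Lemma vscal_vzero a : vscal a (@vzero V) = vzero.
Proof. apply vadd_idempotent; rewrite <- vscal_distr_v, vadd_zero; reflexivity. Qed.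

Lemma vsum_ext n (f h : nat -> V) : (forall i, (i < n)%nat -> f i = h i) -> vsum n f = vsum n h.
Proof.
  induction n as [|n IH]; simpl; intros Hfh; auto.
  rewrite IH by (intros; apply Hfh; lia). rewrite Hfh by lia; reflexivity.
Qed.

Lemma vsum_add n (f h : nat -> V) : vsum n (fun i => vadd (f i) (h i)) = vadd (vsum n f) (vsum n h).
Proof.
  induction n as [|n IH]; simpl; [rewrite vadd_zero; reflexivity|]. rewrite IH, !vadd_assoc.
  f_equal. rewrite <- !vadd_assoc; f_equal; apply vadd_comm.
Qed.

Lemma vsum_scal n c (f : nat -> V) : vsum n (fun i => vscal c (f i)) = vscal c (vsum n f).
Proof. induction n as [|n IH]; simpl; [rewrite vscal_vzero|rewrite IH, vscal_distr_v]; reflexivity. Qed.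

Lemma vsum_swap n m (f : nat -> nat -> V) :
  vsum n (fun i => vsum m (fun j => f i j)) = vsum m (fun j => vsum n (fun i => f i j)).
Proof.
  induction n as [|n IH]; simpl.
  - induction m as [|m IHm]; simpl; [reflexivity|]. rewrite <- IHm, vadd_zero; reflexivity.
  - rewrite IH, <- vsum_add; reflexivity.
Qed.

Lemma vscal_rsum n (c : nat -> R) (u : V) : vscal (rsum n c) u = vsum n (fun j => vscal (c j) u).
Proof. induction n as [|n IH]; simpl; [apply vscal_zero|rewrite vscal_distr_r, IH; reflexivity]. Qed.

Lemma combination_point n a (v : nat -> V) : (a < n)%nat -> combination n (point a 1) v = v a.
Proof.
  unfold point; induction n as [|n IH]; simpl; intros Ha; [lia|].
  destruct (Nat.eqb_spec n a) as [->|Hna].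
  - rewrite (vsum_ext _ _ (fun i => vscal 0 (v i))).
    + rewrite vsum_scal, vscal_zero, vadd_zero_l, vscal_one; reflexivity.
    + intros i Hi; destruct (Nat.eqb_spec i a); [lia|reflexivity].
  - rewrite IH, vscal_zero, vadd_zero by lia; reflexivity.
Qed.

Lemma combination_injective m (v : nat -> V) al be :
  affinely_independent m v -> rsum m al = rsum m be ->
  combination m al v = combination m be v -> forall i, (i < m)%nat -> al i = be i.
Proof.
  intros HA Hs Hv i Hi.
  enough (al i + -1 * be i = 0) by lra.
  apply (HA (fun k => al k + -1 * be k)); auto.
  - rewrite rsum_plus, rsum_mult; lra.
  - rewrite (vsum_ext _ _ (fun k => vadd (vscal (al k) (v k)) (vscal (-1) (vscal (be k) (v k))))).
    + rewrite vsum_add, vsum_scal, Hv; apply vadd_opp.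
    + intros k _; rewrite vscal_assoc, vscal_distr_r; reflexivity.
Qed.

Lemma combination_left_fixed m (v y : nat -> V) A pi :
  (forall i, (i < m)%nat -> y i = combination m (A i) v) -> left_fixed m A pi ->
  combination m pi y = combination m pi v.
Proof.
  intros Hy Hfix.
  rewrite (vsum_ext _ _ (fun i => vsum m (fun j => vscal (pi i * A i j) (v j)))).
  - rewrite vsum_swap; apply vsum_ext; intros j Hj.
    rewrite <- vscal_rsum, Hfix; auto.
  - intros i Hi; rewrite Hy, <- vsum_scal by auto.
    apply vsum_ext; intros j _; apply vscal_assoc.
Qed.

End Combinations.

(** * Weakly naturally quasiconvex correspondences on a simplex *)

Lemma std_simplex_coord_bound n lam i : in_std_simplex n lam -> (i < n)%nat -> 0 <= lam i <= 1.
Proof.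
  intros [Hs Hpos] Hi. split; [auto|]. rewrite <- Hs; apply rsum_le_term; auto.
Qed.

Lemma point_in_std_simplex n a : (a < n)%nat -> in_std_simplex n (point a 1).
Proof.
  intros Ha; split; [apply rsum_point; auto|].
  intros i _; unfold point; destruct (Nat.eqb i a); lra.
Qed.

Definition pad (m : nat) (mu : nat -> R) (i : nat) : R := if Nat.ltb i m then mu i else 0.

Lemma pad_in_std_simplex m mu : in_std_simplex m mu -> in_std_simplex (S m) (pad m mu).
Proof.
  intros [Hs Hpos]; split.
  - simpl; unfold pad at 2; rewrite Nat.ltb_irrefl, (rsum_ext _ _ mu); [lra|].
    intros i Hi; unfold pad; apply Nat.ltb_lt in Hi; rewrite Hi; reflexivity.
  - intros i _; unfold pad; destruct (Nat.ltb_spec i m); [apply Hpos; auto|lra].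
Qed.

Section SimplexWNQ.

Variables (F : RVectorSpace) (K : F -> Prop) (T : F -> F -> Prop) (m : nat) (v : nat -> F).
Hypothesis Hind : affinely_independent m v.
Hypothesis HK : forall x, K x <-> exists lam, in_std_simplex m lam /\ x = combination m lam v.
Hypothesis HW : WNQ K K T.

Lemma vertex_in_simplex i : (i < m)%nat -> K (v i).
Proof.
  intros Hi; apply HK; exists (point i 1).
  split; [apply point_in_std_simplex|symmetry; apply combination_point]; auto.
Qed.

Definition affine_selection (y : nat -> F) : Prop :=
  (forall i, (i < m)%nat -> T (v i) (y i)) /\
  (forall mu, in_std_simplex m mu -> T (combination m mu v) (combination m mu y)).

Lemma affine_selection_single_vertex : m = 1%nat -> exists y, affine_selection y.
Proof.
  intros Hm1.
  destruct (HW 1%nat (fun _ => v 0%nat)) as (y & g & Hy & Hg & _ & Hlam).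
  - lia.
  - intros; apply vertex_in_simplex; lia.
  - intros; lia.
  - exists y; unfold affine_selection; rewrite Hm1; split.
    + intros i Hi; replace i with 0%nat by lia; apply Hy; lia.
    + intros mu [Hs _]. simpl in Hs.
      destruct (Hg 0%nat ltac:(lia)) as (_ & _ & _ & Hg1).
      specialize (Hlam mu ltac:(split; [simpl; lra|intros i Hi; replace i with 0%nat by lia; lra])).
      simpl in Hlam |- *. replace (mu 0%nat) with 1 in * by lra. rewrite Hg1 in Hlam; exact Hlam.
Qed.

(* For at least two vertices, the vertices together with the midpoint of the
   first edge form [m + 1 >= 3] distinct points of [K]. *)
Definition midpoint_coords (k : nat) : R := point 0 (1 / 2) k + point 1 (1 / 2) k.

Definition family_coords (i : nat) : nat -> R :=
  if Nat.ltb i m then point i 1 else midpoint_coords.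

Definition family (i : nat) : F := combination m (family_coords i) v.

Lemma family_coords_in_simplex i : (2 <= m)%nat -> in_std_simplex m (family_coords i).
Proof.
  intros Hm; unfold family_coords; destruct (Nat.ltb_spec i m).
  - apply point_in_std_simplex; auto.
  - split; [unfold midpoint_coords; rewrite rsum_plus, !rsum_point by lia; lra|].
    intros k _; unfold midpoint_coords, point; destruct (Nat.eqb k 0), (Nat.eqb k 1); lra.
Qed.

Lemma family_vertex i : (i < m)%nat -> family i = v i.
Proof.
  intros Hi; unfold family, family_coords.
  apply Nat.ltb_lt in Hi as Hi'; rewrite Hi'; apply combination_point; auto.
Qed.

(* Affine independence makes the [m + 1] points pairwise distinct. *)
Lemma family_injective i j : (2 <= m)%nat -> (i < S m)%nat -> (j < S m)%nat ->
  family i = family j -> i = j.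
Proof.
  intros Hm Hi Hj Hij.
  assert (Hc : forall k, (k < m)%nat -> family_coords i k = family_coords j k).
  { apply (combination_injective m v); auto.
    rewrite (proj1 (family_coords_in_simplex i Hm)), (proj1 (family_coords_in_simplex j Hm)).
    reflexivity. }
  assert (Hmid : forall k, midpoint_coords k <> 1).
  { intros k; unfold midpoint_coords, point.
    destruct (Nat.eqb_spec k 0), (Nat.eqb_spec k 1); subst; try discriminate; lra. }
  unfold family_coords in Hc.
  destruct (Nat.ltb_spec i m), (Nat.ltb_spec j m); try lia.
  - specialize (Hc i ltac:(lia)); unfold point in Hc; rewrite Nat.eqb_refl in Hc.
    destruct (Nat.eqb_spec i j); [auto|lra].
  - specialize (Hc i ltac:(lia)); unfold point in Hc; rewrite Nat.eqb_refl in Hc.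
    exfalso; apply (Hmid i); auto.
  - specialize (Hc j ltac:(lia)); unfold point in Hc; rewrite Nat.eqb_refl in Hc.
    exfalso; apply (Hmid j); auto.
Qed.

(* With [m + 1 >= 3] points the coordinate maps of the WNQ property are
   forced to be identities, so [T] interpolates affinely. *)
Lemma affine_selection_many_vertices : (2 <= m)%nat -> exists y, affine_selection y.
Proof.
  intros Hm.
  destruct (HW (S m) family) as (y & g & Hy & Hg & [Hbij _] & Hlam).
  - lia.
  - intros i _; apply HK; exists (family_coords i); split; [apply family_coords_in_simplex|]; auto.
  - intros i j Hi Hj; apply family_injective; auto.
  - assert (Hid : forall i, (i < S m)%nat -> forall t, 0 <= t <= 1 -> g i t = t).
    { apply coordinate_maps_identity; [lia| |].
      - intros i Hi; destruct (Hg i Hi) as (_ & Hrange & H0 & H1).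
        repeat split; auto; intros t Ht; apply Hrange; auto.
      - intros lam Hl; apply (Hbij lam Hl). }
    exists y; split.
    + intros i Hi; rewrite <- family_vertex by auto; apply Hy; lia.
    + intros mu Hmu. pose proof (pad_in_std_simplex m mu Hmu) as Hpad.
      specialize (Hlam _ Hpad); simpl in Hlam.
      unfold pad at 2 4 in Hlam; rewrite Nat.ltb_irrefl, Hid, !vscal_zero, !vadd_zero in Hlam
        by (lia || lra).
      rewrite (vsum_ext _ _ (fun i => vscal (mu i) (v i))),
              (vsum_ext _ (fun i => vscal (g i (pad m mu i)) (y i))
                          (fun i => vscal (mu i) (y i))) in Hlam; [exact Hlam| |].
      * intros i Hi; unfold pad; apply Nat.ltb_lt in Hi as Hi'; rewrite Hi', Hid;
          [reflexivity|lia|apply (std_simplex_coord_bound m); auto].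
      * intros i Hi; unfold pad; apply Nat.ltb_lt in Hi as Hi'; rewrite Hi', family_vertex by auto.
        reflexivity.
Qed.

Lemma affine_selection_exists : (1 <= m)%nat -> exists y, affine_selection y.
Proof.
  intros Hm; destruct (Nat.eq_dec m 1).
  - apply affine_selection_single_vertex; auto.
  - apply affine_selection_many_vertices; lia.
Qed.

Lemma barycentric_matrix (y : nat -> F) :
  (forall i, (i < m)%nat -> K (y i)) ->
  exists A, stochastic m A /\ forall i, (i < m)%nat -> y i = combination m (A i) v.
Proof.
  intros Hy.
  destruct (functional_choice (fun i a => (i < m)%nat -> in_std_simplex m a /\ y i = combination m a v))
    as [A HA].
  - intros i; destruct (Nat.ltb_spec i m) as [Hi|Hi].
    + destruct (proj1 (HK (y i)) (Hy i Hi)) as [a Ha]; exists a; auto.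
    + exists (fun _ => 0); lia.
  - exists A; repeat split.
    + intros i j Hi Hj; apply (HA i Hi); auto.
    + intros i Hi; apply (HA i Hi).
    + intros i Hi; apply (HA i Hi).
Qed.

End SimplexWNQ.

(* The
   barycenter of the vertices weighted by a stationary distribution of the
   barycentric matrix of the affine selection is mapped to itself. *)
Theorem theorem4 (F : RVectorSpace) (K : F -> Prop) (T : F -> F -> Prop) :
  is_simplex K ->
  (forall x y, K x -> T x y -> K y) ->
  WNQ K K T ->
  exists xs, K xs /\ T xs xs.
Proof.
  intros (m & v & Hm & Hind & HK) Hclosed HW.
  destruct (affine_selection_exists F K T m v Hind HK HW Hm) as [y [Hyv Haff]].
  destruct (barycentric_matrix F K m v HK y) as [A [HA Hy]].
  { intros i Hi; apply (Hclosed (v i)); [apply (vertex_in_simplex F K m v HK)|apply Hyv]; auto. }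
  destruct (stationary_distribution m A Hm HA) as [pi [Hpi Hfix]].
  exists (combination m pi v); split.
  - apply HK; exists pi; auto.
  - rewrite <- (combination_left_fixed m v y A pi) at 2 by auto.
    apply Haff; auto.
Qed.
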